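(* For all $n\ge0$, $z(n)\in\{f(n),\ f(n)+n,\ f(n)+1,\ f(n)-n\}$.
   Context: $\mathbb{N}=\{0,1,2,\dots\}$. The sequence $f:\mathbb{N}\to\mathbb{N}$ is defined greedily: $f(0)=0$, and for $n\ge1$, $f(n)$ is the least natural number such that (i) $f(n)\notin\{f(0),f(1),\dots,f(n-1)\}$ and (ii) $\sum_{1\le i\le n} f(i)$ is divisible by $n$. The sequence $z:\mathbb{N}\to\mathbb{N}$ is defined greedily: $z(0)=0$, and for $n\ge1$, $z(n)$ is the least natural number such that (i) $z(n)\notin\{z(0),\dots,z(n-1)\}$ and (ii) $\sum_{2\le i\le n} z(i)$ is divisible by $n+1$ (the empty sum being $0$). *)

From mathcomp Require Import all_boot.
Set Implicit Arguments. Unset Strict Implicit. Unset Printing Implicit Defensive.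

(* A greedy sequence is built from its history s = [:: a(0); ...; a(n-1)]
   (so n = size s): a(n) is the least natural m satisfying [ok s m].
   The search is over [0, (n+1)(n+2)); this bound is always large enough
   for the predicates below (the admissible m form a residue class modulo
   n (resp. n+1); at most n of its first n+1 members are excluded by the
   history, so a valid m exists below n + n*(n+1) < (n+1)(n+2)).  Since
   the search list is increasing, its head is the least admissible m. *)
Definition greedy_next (ok : seq nat -> nat -> bool) (s : seq nat) : nat :=
  head 0 [seq m <- iota 0 ((size s).+1 * (size s).+2) | ok s m].

Fixpoint greedy_hist (ok : seq nat -> nat -> bool) (n : nat) : seq nat :=
  match n with
  | 0 => [:: 0]
  | k.+1 => let s := greedy_hist ok k in rcons s (greedy_next ok s)
  end.

Definition greedy_seq (ok : seq nat -> nat -> bool) (n : nat) : nat :=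
  nth 0 (greedy_hist ok n) n.

(* f: f(n) not among f(0..n-1), and n divides sum_{1<=i<=n} f(i) *)
Definition f_ok (s : seq nat) (m : nat) : bool :=
  (m \notin s) && (size s %| sumn (drop 1 (rcons s m))).

(* z: z(n) not among z(0..n-1), and n+1 divides sum_{2<=i<=n} z(i) *)
Definition z_ok (s : seq nat) (m : nat) : bool :=
  (m \notin s) && ((size s).+1 %| sumn (drop 2 (rcons s m))).

Definition f := greedy_seq f_ok.
Definition z := greedy_seq z_ok.

(* Both sequences are greedy with respect to a running mean.  If the history
   of f up to index n has sum n * a (over indices >= 1) and contains every
   value below a, then the divisibility condition forces f (n + 1) to be a or
   a + n + 1, whichever is the least unused; likewise z (n + 1) is b or
   b + n + 2 for the running mean b of z.  The theorem follows from an
   invariant coupling the two histories F and Z: either a = b + 1 and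
   Z \ F is F \ Z shifted down by one, or a = b, a is used by f, and the same
   shift identity holds up to one pivot value and the bound a + n.  In the
   first case z takes its large value and f either agrees with it or is
   n + 1 below; in the second f takes its large value and z is either one
   above it or n + 1 below. *)

From mathcomp Require Import all_boot zify.

Set Implicit Arguments.
Unset Strict Implicit.
Unset Printing Implicit Defensive.

Lemma greedy_next_least (ok : seq nat -> nat -> bool) s c :
  c < (size s).+1 * (size s).+2 -> ok s c ->
  (forall x, x < c -> ~~ ok s x) -> greedy_next ok s = c.
Proof.
move=> c_lt okc c_min.
rewrite /greedy_next -(subnKC (ltnW c_lt)) iotaD filter_cat /=.
have -> : [seq m <- iota 0 c | ok s m] = [::].
  apply/eqP; rewrite -[_ == _]negbK -has_filter.
  by apply/hasPn => x; rewrite mem_iota => /andP[_ /c_min].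
by rewrite -(subnSK c_lt) /= okc.
Qed.

Lemma dvdn_window k c x :
  c <= x < c + k.+1 -> (k.+1 %| k * c + x) = (x == c).
Proof.
move=> /andP[c_le x_lt].
have -> : k * c + x = k.+1 * c + (x - c) by lia.
rewrite dvdn_addr ?dvdn_mulr //.
case: eqVneq => [-> | x_neq]; first by rewrite subnn dvdn0.
by rewrite gtnNdvd //; lia.
Qed.

(* [s] is a history whose sum from index [lo] on equals [k * c]; the next
   term must make that sum divisible by [k + 1]. *)
Record mean_state (lo k c : nat) (s : seq nat) : Prop := MeanState {
  mean_size : size s + lo = k.+2;
  mean_lo : lo <= size s;
  mean_sum : sumn (drop lo s) = k * c;
  mean_le : c <= k;
  mean_prefix : forall x, x < c -> x \in s;
  mean_bound : forall x, x \in s -> x <= c + k }.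

Section MeanGreedy.

Variables (ok : seq nat -> nat -> bool) (lo : nat).
Hypothesis okE : forall s m,
  ok s m = (m \notin s) && ((size s + lo).-1 %| sumn (drop lo (rcons s m))).

Lemma mean_okE k c s : mean_state lo k c s ->
  forall x, ok s x = (x \notin s) && (k.+1 %| k * c + x).
Proof.
case=> sz lo_s sum _ _ _ x.
by rewrite okE sz drop_rcons // sumn_rcons sum.
Qed.

Lemma mean_state_next k c s : mean_state lo k c s ->
  greedy_next ok s = if c \in s then c + k.+1 else c.
Proof.
move=> st; have [sz lo_s _ c_le pre bnd] := st.
have okcs := mean_okE st.
have not_ok x : x < c + k.+1 -> x != c -> ~~ ok s x.
  move=> x_lt x_neq; rewrite okcs negb_and negbK.
  case: (ltnP x c) => [/pre -> // | c_le_x].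
  by rewrite dvdn_window ?x_neq ?orbT // c_le_x.
have c_small : c + k.+1 < (size s).+1 * (size s).+2 by nia.
case: ifP => c_in; apply: greedy_next_least => //.
- rewrite okcs; apply/andP; split; first by apply/negP => /bnd; lia.
  have -> : k * c + (c + k.+1) = k.+1 * c.+1 by lia.
  exact: dvdn_mulr.
- move=> x x_lt.
  by case: (eqVneq x c) => [-> | x_neq]; [rewrite okcs c_in | exact: not_ok].
- lia.
- by rewrite okcs c_in dvdn_window ?eqxx //; lia.
- by move=> x x_lt; rewrite okcs (pre x x_lt).
Qed.

Lemma mean_state_rcons k c s : mean_state lo k c s ->
  mean_state lo k.+1 (if c \in s then c.+1 else c) (rcons s (greedy_next ok s)).
Proof.
move=> st; have [sz lo_s sum c_le pre bnd] := st.
rewrite (mean_state_next st); split; rewrite ?size_rcons.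
- by rewrite addSn sz.
- exact: leqW.
- by rewrite drop_rcons // sumn_rcons sum; case: ifP; lia.
- by case: ifP; lia.
- move=> x; rewrite mem_rcons in_cons.
  case: ifP => c_in x_lt; last by rewrite pre ?orbT.
  by move: x_lt; rewrite ltnS leq_eqVlt => /orP[/eqP -> | /pre ->]; rewrite ?c_in orbT.
- move=> x; rewrite mem_rcons in_cons => /orP[/eqP -> | /bnd]; case: ifP; lia.
Qed.

End MeanGreedy.

Lemma f_okE s m :
  f_ok s m = (m \notin s) && ((size s + 1).-1 %| sumn (drop 1 (rcons s m))).
Proof. by rewrite addn1. Qed.

Lemma z_okE s m :
  z_ok s m = (m \notin s) && ((size s + 2).-1 %| sumn (drop 2 (rcons s m))).
Proof. by rewrite addn2. Qed.

Definition memD (A B : seq nat) (v : nat) : bool := (v \in A) && (v \notin B).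

(* In set notation, [shift_coupled F Z] reads Z \ F = (F \ Z) - 1 and
   [pivot_coupled p q F Z] reads (Z \ F) ∪ {p} = ((F \ Z) - 1) ∪ {q}. *)
Definition shift_coupled (F Z : seq nat) : Prop :=
  forall v, memD Z F v = memD F Z v.+1.

Definition pivot_coupled (p q : nat) (F Z : seq nat) : Prop :=
  forall v, memD Z F v || (v == p) = memD F Z v.+1 || (v == q).

Ltac decide_nat_eqs :=
  repeat match goal with
  | |- context[?x == ?y] =>
      first [ have -> : (x == y) = true by apply/eqP; lia
            | have -> : (x == y) = false by apply/eqP; lia ]
  end.

Ltac drop_large_mem :=
  repeat match goal with
  | H : forall x, is_true (in_mem x ?M) -> _ |- context[in_mem ?y ?M] =>
      have -> : in_mem y M = false by apply/negP => /H; lia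
  end.

Ltac bash_mem :=
  rewrite /memD ?mem_rcons ?in_cons; decide_nat_eqs; drop_large_mem;
  repeat match goal with |- context[?x \in ?s] => case: (x \in s) end;
  rewrite /= ?eqxx; decide_nat_eqs.

Lemma pivot_coupled_bound p q F Z : pivot_coupled p q F Z -> p <= q ->
  (forall x, x \in F -> x <= q) -> forall x, x \in Z -> x <= q.
Proof.
move=> E p_le F_le x x_Z; rewrite leqNgt; apply/negP => q_lt.
by move: (E x) x_Z; bash_mem.
Qed.

Lemma pivot_coupled_succ p q F Z : pivot_coupled p q F Z -> p != q ->
  memD F Z p.+1.
Proof. by move=> E pq; move: (E p); rewrite eqxx (negbTE pq) !orbT orbF. Qed.

Lemma shift_coupled_rcons_same y F Z : shift_coupled F Z ->
  (forall x, x \in F -> x < y) -> shift_coupled (rcons F y) (rcons Z y).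
Proof.
move=> E F_lt v.
case: (eqVneq v y) => [-> | v_y]; first by bash_mem.
by case: (eqVneq v.+1 y) => v1_y; move: (E v); bash_mem.
Qed.

Lemma shift_coupled_rcons_small c y F Z : shift_coupled F Z ->
  (forall x, x \in F -> x < y) -> c.+2 < y -> c \in F -> c.+1 \notin F ->
  pivot_coupled (if c.+1 \in Z then c.+1 else c) y (rcons F c.+1) (rcons Z y).
Proof.
move=> E F_lt c_lt cF c1F v.
case: (eqVneq v c.+1) => [-> | v_c1]; first by move: (E c.+1) c1F; bash_mem.
case: (eqVneq v c) => [-> | v_c]; first by move: (E c) cF c1F; bash_mem.
case: (eqVneq v y) => [-> | v_y]; first by bash_mem.
by case: (eqVneq v.+1 y) => v1_y; move: (E v); bash_mem.
Qed.

Lemma pivot_coupled_rcons_large p q F Z : pivot_coupled p q F Z -> p < q ->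
  (forall x, x \in F -> x <= q) -> (forall x, x \in Z -> x <= q) ->
  pivot_coupled p q.+2 (rcons F q.+1) (rcons Z q.+2).
Proof.
move=> E p_lt F_le Z_le v.
case: (eqVneq v q.+2) => [-> | v_q2]; first by bash_mem.
case: (eqVneq v q.+1) => [-> | v_q1]; first by bash_mem.
case: (eqVneq v q) => [-> | v_q]; first by move: (E q); bash_mem.
by move: (E v); bash_mem.
Qed.

Lemma pivot_coupled_rcons_small c q F Z : pivot_coupled c q F Z -> c.+1 < q ->
  (forall x, x \in F -> x <= q) -> (forall x, x \in Z -> x <= q) ->
  c \in F -> c.+1 \in F -> c.+1 \notin Z ->
  shift_coupled (rcons F q.+1) (rcons Z c.+1).
Proof.
move=> E c_lt F_le Z_le cF c1F c1Z v.
case: (eqVneq v c) => [-> | v_c]; first by move: cF c1F c1Z; bash_mem.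
case: (eqVneq v c.+1) => [-> | v_c1]; first by move: (E c.+1) c1F c1Z; bash_mem.
case: (eqVneq v q.+1) => [-> | v_q1]; first by bash_mem.
case: (eqVneq v q) => [-> | v_q]; first by move: (E q); bash_mem.
by move: (E v); bash_mem.
Qed.

Lemma shift_coupled_mem b F Z : shift_coupled F Z -> 0 < b ->
  (forall x, x <= b -> x \in F) -> (forall x, x < b -> x \in Z) -> b \in Z.
Proof.
case: b => // c E _ F_pre Z_pre.
have := F_pre c.+1 (leqnn _); have := F_pre c (leqnSn c).
by move: (E c) (Z_pre c (ltnSn c)); bash_mem.
Qed.

Definition coupled (n a b : nat) (F Z : seq nat) : Prop :=
  (a = b.+1 /\ shift_coupled F Z) \/
  (a = b /\ a \in F /\ pivot_coupled (if a \in Z then a else a.-1) (a + n) F Z).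

Record pair_state (n a b : nat) (F Z : seq nat) : Prop := PairState {
  pair_f : mean_state 1 n a F;
  pair_z : mean_state 2 n.+1 b Z;
  pair_two_le : 2 <= a;
  pair_coupled : coupled n a b F Z }.

Lemma f_next n a F : mean_state 1 n a F ->
  greedy_next f_ok F = if a \in F then a + n.+1 else a.
Proof. exact: (mean_state_next f_okE). Qed.

Lemma z_next n b Z : mean_state 2 n.+1 b Z ->
  greedy_next z_ok Z = if b \in Z then b + n.+2 else b.
Proof. exact: (mean_state_next z_okE). Qed.

Lemma pair_state_shift n a b F Z : pair_state n a b F Z -> a = b.+1 ->
  b \in Z /\ shift_coupled F Z.
Proof.
case=> [[_ _ _ _ F_pre _] [_ _ _ _ Z_pre _] two_le [[_ E] | [ab' _]] ab]; last lia.
split=> //; apply: (shift_coupled_mem E) => [| x x_le |] //; first lia.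
by apply: F_pre; lia.
Qed.

Lemma pair_state_next n a b F Z : pair_state n a b F Z ->
  let x := greedy_next f_ok F in let y := greedy_next z_ok Z in
  y = x \/ y = x + n.+1 \/ y = x + 1 \/ y + n.+1 = x.
Proof.
move=> st; have [fs zs _ [[ab _] | [ab [aF _]]]] := st;
  rewrite /= (f_next fs) (z_next zs).
- by have [-> _] := pair_state_shift st ab; case: ifP; lia.
- by rewrite aF -ab; case: ifP; lia.
Qed.

Lemma pair_state_rcons n a b F Z : pair_state n a b F Z ->
  pair_state n.+1 (if a \in F then a.+1 else a) (if b \in Z then b.+1 else b)
    (rcons F (greedy_next f_ok F)) (rcons Z (greedy_next z_ok Z)).
Proof.
move=> st; have [fs zs two_le cp] := st.
split; [exact: (mean_state_rcons f_okE fs) | exact: (mean_state_rcons z_okE zs) |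
  by case: ifP; lia |].
have [_ _ _ a_le F_pre F_le] := fs.
rewrite (f_next fs) (z_next zs).
case: cp => [[ab _] | [ab [aF E]]].
- have [bZ E] := pair_state_shift st ab; rewrite bZ; subst a.
  have F_lt x : x \in F -> x < b + n.+2 by move/F_le; lia.
  rewrite /coupled (_ : b.+1 + n.+1 = b + n.+2); last lia.
  case: ifP => aF.
  + by left; split=> //; apply: shift_coupled_rcons_same.
  + right; split=> //; split; first by rewrite mem_rcons mem_head.
    rewrite mem_rcons in_cons (_ : (b.+1 == _) = false) /=; last by apply/eqP; lia.
    rewrite (_ : b.+1 + n.+1 = b + n.+2); last lia.
    apply: shift_coupled_rcons_small => //; [lia | exact: F_pre | by rewrite aF].
- subst b; rewrite aF.
  have p_le : (if a \in Z then a else a.-1) <= a + n by case: ifP; lia.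
  have Z_le := pivot_coupled_bound E p_le F_le.
  have a_lt : a < a + n by lia.
  rewrite /coupled !addnS addSn; case: ifP E => aZ E.
  + have /andP[a1F a1Z] := pivot_coupled_succ E (negbT (ltn_eqF a_lt)).
    right; split=> //; split; first by rewrite mem_rcons in_cons a1F orbT.
    rewrite mem_rcons in_cons (negbTE a1Z) (_ : (a.+1 == _) = false) /=;
      last by apply/eqP; lia.
    by apply: pivot_coupled_rcons_large.
  + left; split=> //.
    have [c ac] : exists c, a = c.+1 by exists a.-1; lia.
    subst a; apply: pivot_coupled_rcons_small => //; [exact: F_pre | by rewrite aZ].
Qed.

Lemma size_greedy_hist ok n : size (greedy_hist ok n) = n.+1.
Proof. by elim: n => //= n IHn; rewrite size_rcons IHn. Qed.

Lemma greedy_seqS ok n : greedy_seq ok n.+1 = greedy_next ok (greedy_hist ok n).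
Proof. by rewrite /greedy_seq /= nth_rcons size_greedy_hist ltnn eqxx. Qed.

Lemma pair_state_hist n : 2 <= n ->
  exists a b, pair_state n a b (greedy_hist f_ok n) (greedy_hist z_ok n).
Proof.
elim: n => // n IHn; rewrite leq_eqVlt => /orP[/eqP[<-] | /IHn [a [b st]]].
  have -> : greedy_hist z_ok 2 = greedy_hist f_ok 2 by vm_compute.
  have -> : greedy_hist f_ok 2 = [:: 0; 1; 3] by vm_compute.
  exists 2, 1; split=> //; last by left; split=> // v; rewrite /memD !andbN.
  - by split=> // x; [case: x => [|[|]] | rewrite !inE => /or3P[] /eqP ->].
  - by split=> // x; [case: x | rewrite !inE => /or3P[] /eqP ->].
by eexists _, _; exact: pair_state_rcons st.
Qed.

Theorem theorem6 (n : nat) :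
  z n = f n \/ z n = f n + n \/ z n = f n + 1 \/ z n + n = f n.
Proof.
case: (leqP n 2) => [n_le | n_gt].
  by case: n n_le => [|[|[|]]] //; left; vm_compute.
case: n n_gt => // k k_ge; rewrite /z /f !greedy_seqS.
have [a [b st]] := pair_state_hist k_ge.
exact: pair_state_next st.
Qed.
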